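(* Let $x,y$ be non-commuting indeterminates and $C=xyx^{-1}y^{-1}$. Let $(R_n)_{n\in\mathbb Z}$ satisfy $$R_{2n}CR_{2n-2}=1+R_{2n-1},\qquad R_{2n+1}CR_{2n-1}=1+R_{2n}^4\qquad(n\in\mathbb Z),$$ with $R_0=yxy^{-1}$ and $R_1=y$. Then for all $n\ge0$, $u_n=R_{2n}$ is a Laurent polynomial in $x,y$ with only non-negative integer coefficients.
   Context: Work in the free skew field (non-commutative rational functions) over $\mathbb C$ generated by $x,y$. A Laurent polynomial in $x,y$ is a $\mathbb Z$-linear combination of words in $x^{\pm1},y^{\pm1}$. *)

From HB Require Import structures.
From mathcomp Require Import all_boot all_order all_algebra.
From mathcomp Require Import reals.
From mathcomp.real_closed Require Import complex.
Set Implicit Arguments. Unset Strict Implicit. Unset Printing Implicit Defensive.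
Import Order.TTheory GRing.Theory Num.Theory.
Local Open Scope ring_scope.

(* A word in the letters x,y: false = x, true = y. *)
Definition word := seq bool.
(* A noncommutative polynomial in K<x,y>, presented as a formal finite sum
   of (coefficient, monomial); two presentations denote the same element of
   K<x,y> iff they have the same coefficient at every word. *)
Definition ncp (K : Type) := seq (K * word).

Definition ncp_coef (K : nmodType) (p : ncp K) (w : word) : K :=
  \sum_(t <- p | t.2 == w) t.1.

Definition ncp_mul (K : pzSemiRingType) (p q : ncp K) : ncp K :=
  [seq (a.1 * b.1, a.2 ++ b.2) | a <- p, b <- q].

Definition ncmx_factors (K : pzSemiRingType) (n r : nat)
  (A : 'I_n -> 'I_n -> ncp K) (P : 'I_n -> 'I_r -> ncp K)
  (Q : 'I_r -> 'I_n -> ncp K) : Prop :=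
  forall i j w, ncp_coef (A i j) w =
    ncp_coef (flatten [seq ncp_mul (P i k) (Q k j) | k <- enum 'I_r]) w.

Definition ncmx_full (K : pzSemiRingType) (n : nat) (A : 'I_n -> 'I_n -> ncp K) : Prop :=
  forall r, (r < n)%N -> ~ exists P Q, @ncmx_factors K n r A P Q.

Definition word_eval (K : pzRingType) (D : lalgType K) (x y : D) (w : word) : D :=
  \prod_(b <- w) (if b then y else x).

Definition ncp_eval (K : pzRingType) (D : lalgType K) (x y : D) (p : ncp K) : D :=
  \sum_(t <- p) t.1 *: word_eval x y t.2.

(* (D, x, y) is the free skew field (= universal field of fractions of the
   free algebra K<x,y>, Cohn): D is a division K-algebra (K central), D is
   generated as a skew field by K, x, y, and every full matrix over K<x,y>
   becomes invertible over D. *)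
Definition is_free_skew_field (K : fieldType) (D : unitAlgType K) (x y : D) : Prop :=
  [/\ (forall a : D, a != 0 -> a \is a GRing.unit),
      (forall S : D -> Prop, S x -> S y -> (forall c : K, S (c%:A)) ->
         (forall a b, S a -> S b -> S (a + b)) ->
         (forall a b, S a -> S b -> S (a * b)) ->
         (forall a, S a -> S (a^-1)) -> forall d, S d) &
      (forall n (A : 'I_n -> 'I_n -> ncp K), ncmx_full A ->
         exists B : 'M[D]_n,
           (\matrix_(i, j) ncp_eval x y (A i j)) *m B = 1%:M /\
           B *m (\matrix_(i, j) ncp_eval x y (A i j)) = 1%:M)].

(* A letter of a Laurent word: (false,_) = x, (true,_) = y; second
   component true means the inverse letter. *)
Definition lword_eval (D : unitRingType) (x y : D) (w : seq (bool * bool)) : D :=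
  \prod_(l <- w) (let v := if l.1 then y else x in if l.2 then v^-1 else v).

Definition nonneg_laurent (D : unitRingType) (x y : D) (d : D) : Prop :=
  exists s : seq (nat * seq (bool * bool)),
    d = \sum_(t <- s) t.1%:R * lword_eval x y t.2.

From HB Require Import structures.
From mathcomp Require Import all_boot all_order all_algebra.
From mathcomp Require Import reals.
From mathcomp.real_closed Require Import complex.
From mathcomp Require Import zify.
Set Implicit Arguments. Unset Strict Implicit. Unset Printing Implicit Defensive.
Import GRing.Theory.
Local Open Scope ring_scope.

(* Write R_{2m} = u m and R_{2m+1} = v m.  Consecutive terms quasi-commute,
   R_k R_{k+1} = R_{k+1} C R_k, and remain invertible: 1 + R_k^e cannot vanish, since
   then R_k would be a scalar (the ground field is algebraically closed), and a scalar
   quasi-commuting with a unit forces C = 1, i.e. x y = y x.  Quasi-commutation makes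
   psi (u m) (v m) a conserved quantity K, and the recurrence collapses to the linear
   one u (m+2) + C u m = K u (m+1).  For the initial values, C = B g and K = g + B + A
   for Laurent polynomials g, A, B with non-negative coefficients, so that
   u (m+2) - g u (m+1) = A u (m+1) + B (u (m+1) - g u m), and positivity propagates. *)

Section Invariant.
Variable D : unitRingType.
Implicit Types a b c s t u v w C f Z : D.

Lemma comm_1D_V v : GRing.comm (1 + v) v^-1.
Proof. by apply/commrV/commr_sym; apply: commrD; [exact: commr1 | exact: commr_refl]. Qed.

Lemma mulrV1DK v z : v \is a GRing.unit -> z / v * (1 + v) * v = z * (1 + v).
Proof. by move=> uv; rewrite -!mulrA (mulrA v^-1) -comm_1D_V (mulrVK uv). Qed.

Lemma expand_1D_conj b r : (1 + r) * b * (1 + r) = b + r * b + b * r + r * b * r.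
Proof. by rewrite !(mulrDl, mulrDr) !(mul1r, mulr1) !addrA. Qed.

Lemma qcomm_divr a b C : a \is a GRing.unit -> a * b = b * C * a -> b / a = a^-1 * b * C.
Proof.
move=> ua qab; apply: (mulrI ua); apply: (mulIr ua).
by rewrite !mulrA (divrr ua) mul1r (mulrVK ua) qab.
Qed.

Lemma qcomm_mulVr a b C : b \is a GRing.unit -> a * b = b * C * a -> b^-1 * a = C * a / b.
Proof.
move=> ub qab; apply: (mulrI ub); apply: (mulIr ub).
by rewrite !mulrA (divrr ub) mul1r (mulrVK ub).
Qed.

Lemma qcomm_step a b c C f :
    C \is a GRing.unit -> a \is a GRing.unit -> f \is a GRing.unit ->
    a * b = b * C * a -> c * C * a = f -> GRing.comm f b ->
  c \is a GRing.unit /\ b * c = c * C * b.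
Proof.
move=> uC ua uf qab ec fb.
have uCa : C * a \is a GRing.unit by rewrite unitrMl.
have -> : c = f / (C * a) by rewrite -ec -[c * C * a]mulrA (mulrK uCa).
split; first by rewrite unitrMl ?unitrV.
apply: (mulIr uCa); rewrite -[LHS]mulrA (mulrVK uCa) -fb -[RHS]mulrA (mulrA b C a).
by rewrite -qab mulrA -[_ / _ * C * a]mulrA (mulrVK uCa).
Qed.

(* In the application (s, t) is (R_{2m}, R_{2m+1}) in [psi s t] and
   (R_{2m+2}, R_{2m+1}) in [phi s t]. *)
Definition G s t := (1 + t) * s^-1 * (1 + t) + s ^+ 3.
Definition psi s t := t^-1 * G s t * s^-1.
Definition phi s t := s^-1 * G s t * t^-1.

Lemma psi_eq_phi_next u v w C :
    u \is a GRing.unit -> v \is a GRing.unit -> w \is a GRing.unit ->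
  u * v = v * C * u -> w * C * u = 1 + v -> psi u v = phi w v.
Proof.
move=> uu uv uw quv ew.
have Cu : C * u = w^-1 * (1 + v) by rewrite -ew -!mulrA (mulKr uw).
have Cuv : C * u / v = v^-1 * u := esym (qcomm_mulVr uv quv).
have wv : w / v = v^-1 * (1 + v) / u.
  apply: (mulIr uu); rewrite (mulrVK uu) -mulrA -Cuv !mulrA ew.
  exact: comm_1D_V.
have phi_sq : w^-1 * ((1 + v) * w^-1 * (1 + v)) / v = v^-1 * u ^+ 2.
  by rewrite !mulrA -Cu -(mulrA _ w^-1) -Cu -mulrA Cuv mulrA Cuv.
have phi_cube : w^-1 * w ^+ 3 / v = v^-1 * (1 + v) / u * (1 + v) / u.
  by rewrite exprS (mulKr uw) expr2 -mulrA wv !mulrA wv.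
have psi_cube : v^-1 * u ^+ 3 / u = v^-1 * u ^+ 2 by rewrite exprSr mulrA (mulrK uu).
rewrite /phi /G mulrDr mulrDl phi_sq phi_cube /psi /G mulrDr mulrDl psi_cube.
by rewrite addrC !mulrA.
Qed.

Lemma G_conj_shift s t Z : s \is a GRing.unit -> t \is a GRing.unit ->
  Z = s^-1 + s ^+ 3 -> Z / t * G s t / t * s = G s (Z / t * s).
Proof.
move=> us ut Zs.
have cZ : GRing.comm s^-1 Z.
  rewrite Zs; apply: commrD (commr_refl _) _.
  by apply/commr_sym/commrV/commr_sym; exact: commrX.
have lhs : Z / t * G s t / t * s = Z / t * Z / t * s + Z / s / t * s + Z / t + Z.
  rewrite /G expand_1D_conj.
  have -> : s^-1 + t / s + s^-1 * t + t / s * t + s ^+ 3 = Z + t / s + s^-1 * t + t / s * t.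
    by rewrite Zs -!addrA; congr (_ + _); rewrite [RHS]addrC !addrA.
  by rewrite !mulrDr !mulrDl !mulrA !(mulrVK ut, mulrK ut, mulrVK us).
rewrite lhs /G expand_1D_conj (mulrK us) !mulrA cZ.
by rewrite [RHS](@GRing.add D).[ACl (4*3*2*(1*5))] -Zs.
Qed.

Lemma phi_eq_psi_next s t t' C :
    s \is a GRing.unit -> t \is a GRing.unit -> t' \is a GRing.unit ->
  t * s = s * C * t -> t' * C * t = 1 + s ^+ 4 -> phi s t = psi s t'.
Proof.
move=> us ut ut' qts et'.
have ht' : t' = (s^-1 + s ^+ 3) / t * s.
  apply: (mulIr (_ : s^-1 \is a GRing.unit)); first by rewrite unitrV.
  apply: (mulIr ut); rewrite (mulrK us) (mulrVK ut) -mulrA (qcomm_mulVr us qts).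
  by rewrite !mulrA et' mulrDl mul1r exprSr (mulrK us).
apply: (mulrI ut'); apply: (mulIr us).
rewrite /psi /phi !mulrA (divrr ut') mul1r (mulrVK us) ht' (mulrK us).
exact: G_conj_shift.
Qed.

Lemma psi_recurrence a s t v w C :
    C \is a GRing.unit -> s \is a GRing.unit -> v \is a GRing.unit ->
    s * v = v * C * s -> w * C * s = 1 + v -> v * C * t = 1 + s ^+ 4 ->
  s * C * a = 1 + t -> w + C * a = psi s v * s.
Proof.
move=> uC us uv qsv ew et ea.
have vw : v * w = (1 + v) / s * v.
  apply: (mulIr (_ : C * s \is a GRing.unit)); first by rewrite unitrMl.
  rewrite -mulrA (mulrA w) ew -!mulrA (mulrA v C s) -qsv (mulKr us).
  exact: commrD (commr1 v) (commr_refl v).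
have svCt : s^-1 * v * C * t = s^-1 + s ^+ 3.
  by rewrite -!mulrA (mulrA v) et mulrDr mulr1 exprS (mulKr us).
have vCa : v * (C * a) = s^-1 * v * C + s^-1 + s ^+ 3.
  have Ca : C * a = s^-1 * (1 + t) by rewrite -ea -!mulrA (mulKr us).
  by rewrite Ca mulrA (qcomm_divr us qsv) mulrDr mulr1 svCt addrA.
apply: (mulrI uv); rewrite /psi !mulrA (divrr uv) mul1r (mulrVK us) mulrDr vw vCa /G.
rewrite mulrDr mulr1 mulrDl mul1r (qcomm_divr us qsv) !addrA.
by rewrite [LHS](@GRing.add D).[ACl (3*2*1*4)].
Qed.

End Invariant.

Lemma algebraic_scalar (K : closedFieldType) (A : algType K) (b : A) (p : {poly K}) :
    (forall c d : A, c * d = 0 -> c = 0 \/ d = 0) -> p != 0 -> horner_alg b p = 0 ->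
  exists k : K, b = k%:A.
Proof.
move=> dom p_nz; have [r ->] := closed_field_poly_normal p.
rewrite linearZ rmorph_prod /= mulr_algl => /eqP.
rewrite scaler_eq0 lead_coef_eq0 (negPf p_nz) /=.
elim: r => [|z r IHr]; first by rewrite big_nil oner_eq0.
rewrite big_cons rmorphB /= horner_algX horner_algC => /eqP /dom [/eqP|/eqP //].
by rewrite subr_eq0 => /eqP ->; exists z.
Qed.

Section DivisionAlgebra.
Variables (K : closedFieldType) (D : unitAlgType K).
Hypothesis Ddiv : forall a : D, a != 0 -> a \is a GRing.unit.

Lemma division_no_zero_divisors (c d : D) : c * d = 0 -> c = 0 \/ d = 0.
Proof.
have [-> | /Ddiv uc cd] := eqVneq c 0; first by left.
by right; rewrite -(mulKr uc d) cd mulr0.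
Qed.

Lemma qcomm_1DXn_unit (a b C : D) (e : nat) : (0 < e)%N -> C != 1 ->
    a \is a GRing.unit -> b \is a GRing.unit -> a * b = b * C * a ->
  1 + b ^+ e \is a GRing.unit.
Proof.
move=> e_gt0 C_neq1 ua ub qab; apply: Ddiv; apply: contra_neq C_neq1 => b_root.
have [k bk] : exists k : K, b = k%:A.
  apply: (@algebraic_scalar K D b ('X^e + 1%:P) division_no_zero_divisors).
    exact/monic_neq0/monicXnaddC.
  by rewrite rmorphD rmorphXn /= horner_algX horner_algC scale1r addrC.
have : b * a = b * C * a by rewrite -qab bk comm_alg.
by move/(mulIr ua); rewrite -{1}[b]mulr1 => /(mulrI ub) /esym.
Qed.

Lemma qcomm_next (a b c C : D) (e : nat) : (0 < e)%N -> C != 1 -> C \is a GRing.unit ->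
    a \is a GRing.unit -> b \is a GRing.unit ->
    a * b = b * C * a -> c * C * a = 1 + b ^+ e ->
  c \is a GRing.unit /\ b * c = c * C * b.
Proof.
move=> e_gt0 C_neq1 uC ua ub qab ec.
have f_comm : GRing.comm (1 + b ^+ e) b.
  exact: commr_sym (commrD (commr1 b) (commrX e (commr_refl b))).
exact: qcomm_step uC ua (qcomm_1DXn_unit e_gt0 C_neq1 ua ub qab) qab ec f_comm.
Qed.

End DivisionAlgebra.

Section QuasiCommutingSequence.
Variables (K : closedFieldType) (D : unitAlgType K).
Hypothesis Ddiv : forall a : D, a != 0 -> a \is a GRing.unit.
Variables (C : D) (u v : nat -> D).
Hypotheses (uC : C \is a GRing.unit) (C_neq1 : C != 1).
Hypothesis u_rec : forall m, u m.+1 * C * u m = 1 + v m.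
Hypothesis v_rec : forall m, v m.+1 * C * v m = 1 + u m.+1 ^+ 4.
Hypotheses (uu0 : u 0 \is a GRing.unit) (uv0 : v 0 \is a GRing.unit).
Hypothesis qcomm0 : u 0 * v 0 = v 0 * C * u 0.

Lemma seq_qcomm_u m : u m \is a GRing.unit -> v m \is a GRing.unit ->
    u m * v m = v m * C * u m ->
  u m.+1 \is a GRing.unit /\ v m * u m.+1 = u m.+1 * C * v m.
Proof.
move=> uu uv q; exact: (qcomm_next Ddiv (e := 1) isT C_neq1 uC uu uv q (u_rec m)).
Qed.

Lemma seq_qcomm m :
  [/\ u m \is a GRing.unit, v m \is a GRing.unit & u m * v m = v m * C * u m].
Proof.
elim: m => [|m [uu uv q]]; first by [].
have [uu' q'] := seq_qcomm_u uu uv q.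
by have [] := qcomm_next Ddiv (e := 4) isT C_neq1 uC uv uu' q' (v_rec m).
Qed.

Lemma psi_seq_const m : psi (u m) (v m) = psi (u 0) (v 0).
Proof.
elim: m => // m <-; have [uu uv q] := seq_qcomm m; have [uu' uv' _] := seq_qcomm m.+1.
have [_ q'] := seq_qcomm_u uu uv q.
by rewrite (psi_eq_phi_next uu uv uu' q (u_rec m)) (phi_eq_psi_next uu' uv uv' q' (v_rec m)).
Qed.

Lemma seq_recurrence m : u m.+2 + C * u m = psi (u 0) (v 0) * u m.+1.
Proof.
have [uu uv q] := seq_qcomm m.+1.
by rewrite (psi_recurrence uC uu uv q (u_rec m.+1) (v_rec m) (u_rec m)) psi_seq_const.
Qed.

End QuasiCommutingSequence.

Lemma recurrence_closed (R : pzRingType) (P : R -> Prop) (g A B : R) (u : nat -> R) :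
    (forall a b, P a -> P b -> P (a + b)) -> (forall a b, P a -> P b -> P (a * b)) ->
    P g -> P A -> P B -> P (u 0) -> P (u 1 - g * u 0) ->
    (forall m, u m.+2 + B * g * u m = (g + B + A) * u m.+1) ->
  forall m, P (u m).
Proof.
move=> PD PM Pg PA PB Pu0 Pd0 urec.
suff Pu m : P (u m) /\ P (u m.+1 - g * u m) by move=> m; case: (Pu m).
elim: m => [|m [Pu Pd]]; first by [].
have Pu' : P (u m.+1) by rewrite -(subrK (g * u m) (u m.+1)); apply: PD => //; apply: PM.
split=> //.
have -> : u m.+2 - g * u m.+1 = A * u m.+1 + B * (u m.+1 - g * u m).
  rewrite -[u m.+2](addrK (B * g * u m)) urec mulrBr !mulrA !mulrDl.
  by rewrite (@GRing.add R).[ACl (1*5)*(3*(2*4))] subrr add0r.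
by apply: PD; apply: PM.
Qed.

Section NonnegLaurent.
Variables (D : unitRingType) (x y : D).

Lemma nonneg_laurentD a b :
  nonneg_laurent x y a -> nonneg_laurent x y b -> nonneg_laurent x y (a + b).
Proof. by move=> [s ->] [t ->]; exists (s ++ t); rewrite big_cat. Qed.

Lemma nonneg_laurentM a b :
  nonneg_laurent x y a -> nonneg_laurent x y b -> nonneg_laurent x y (a * b).
Proof.
move=> [s ->] [t ->].
exists [seq ((p.1 * q.1)%N, p.2 ++ q.2) | p <- s, q <- t].
rewrite big_allpairs_dep mulr_suml; apply: eq_bigr => p _.
rewrite mulr_sumr; apply: eq_bigr => q _ /=.
rewrite natrM /lword_eval big_cat -!mulrA; congr (_ * _).
by rewrite !mulrA (commr_nat _ q.1).
Qed.

Lemma nonneg_laurent_letter (l : bool * bool) :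
  nonneg_laurent x y (let v := if l.1 then y else x in if l.2 then v^-1 else v).
Proof.
exists [:: (1%N, [:: l])].
by rewrite big_seq1 mul1r /lword_eval big_seq1.
Qed.

Lemma nonneg_laurent_x : nonneg_laurent x y x.
Proof. exact: nonneg_laurent_letter (false, false). Qed.

Lemma nonneg_laurent_y : nonneg_laurent x y y.
Proof. exact: nonneg_laurent_letter (true, false). Qed.

Lemma nonneg_laurent_xV : nonneg_laurent x y x^-1.
Proof. exact: nonneg_laurent_letter (false, true). Qed.

Lemma nonneg_laurent_yV : nonneg_laurent x y y^-1.
Proof. exact: nonneg_laurent_letter (true, true). Qed.

End NonnegLaurent.

#[local] Hint Resolve nonneg_laurentD nonneg_laurentM nonneg_laurent_x nonneg_laurent_y
  nonneg_laurent_xV nonneg_laurent_yV : core.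

Section InitialValues.
Variables (D : unitRingType) (x y : D).
Hypotheses (ux : x \is a GRing.unit) (uy : y \is a GRing.unit).

Lemma commutator_factor : x * y / x / y = x * x / y * (y / x * y / x / y).
Proof. by rewrite !mulrA (mulrVK uy) (mulrK ux). Qed.

Lemma psi_initial :
  psi (y * x / y) y = y / x * y / x / y + x * x / y + (x^-1 + x^-1 * y + y / x) / x / y.
Proof.
have u0V : (y * x / y)^-1 = y / x / y by rewrite !invrM ?unitrMl ?unitrV // invrK mulrA.
have cross_term :
    y^-1 * ((1 + y) * (y / x / y) * (1 + y)) * (y / x / y) = (1 + y) / x * (1 + y) / x / y.
  by rewrite !mulrA -{1}(mul1r y^-1) !(mulrV1DK _ uy) mul1r.
have cube_term : y^-1 * (y * x / y) ^+ 3 * (y / x / y) = x * x / y.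
  by rewrite !exprS expr0 mulr1 !mulrA (mulVr uy) mul1r !(mulrVK uy) (mulrK ux).
rewrite /psi /G u0V mulrDr mulrDl cross_term cube_term !(mulrDl, mulrDr) !(mul1r, mulr1) !addrA.
by rewrite [LHS](@GRing.add D).[ACl 4*5*1*3*2].
Qed.

Lemma initial_difference (u1 : D) : u1 * (x * y / x / y) * (y * x / y) = 1 + y ->
  u1 - y / x * y / x / y * (y * x / y) = x^-1.
Proof.
have Cu0 : x * y / x / y * (y * x / y) = x.
  by rewrite !mulrA (mulrVK uy) (mulrVK ux) (mulrK uy).
rewrite -mulrA Cu0 => ex; have -> : u1 = (1 + y) / x by rewrite -ex (mulrK ux).
by rewrite !mulrA (mulrVK uy) (mulrVK ux) (mulrK uy) mulrDl mul1r addrK.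
Qed.

Lemma qcomm_initial : y * x / y * y = y * (x * y / x / y) * (y * x / y).
Proof. by rewrite !mulrA !(mulrVK uy) (mulrVK ux) (mulrK uy). Qed.

End InitialValues.

Lemma free_skew_field_noncomm (K : fieldType) (D : unitAlgType K) (x y : D) :
  is_free_skew_field x y -> x * y != y * x.
Proof.
case=> _ _ Dfull.
(* The 1 x 1 matrix [xy - yx] is full, since a factorization through 0 columns has
   zero coefficients; so xy - yx is invertible in D. *)
pose p : ncp K := [:: (1, [:: false; true]); (-1, [:: true; false])].
have p_full : ncmx_full (fun _ _ : 'I_1 => p).
  case=> // _ [P [Q /(_ ord0 ord0 [:: false; true])]].
  rewrite enum_ord0 /= /ncp_coef !big_cons big_nil /= => /eqP.
  by rewrite addr0 oner_eq0.
have [B [pB _]] := Dfull 1%N _ p_full.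
apply/negP => /eqP xy_comm.
have p_eval : ncp_eval x y p = 0.
  rewrite /ncp_eval /word_eval !(big_cons, big_nil) /=.
  by rewrite !mulr1 scale1r scaleN1r addr0 xy_comm subrr.
have := congr1 (fun M : 'M[D]_1 => M ord0 ord0) pB.
by rewrite !mxE big_ord1 mxE p_eval mul0r => /eqP; rewrite eq_sym oner_eq0.
Qed.

Lemma free_skew_field_commutator (K : fieldType) (D : unitAlgType K) (x y : D) :
    is_free_skew_field x y ->
  [/\ x \is a GRing.unit, y \is a GRing.unit & x * y / x / y != 1].
Proof.
move=> HD; have nc := free_skew_field_noncomm HD; have [Ddiv _ _] := HD.
have ux : x \is a GRing.unit by apply: Ddiv; apply: contraNneq nc => ->; rewrite mul0r mulr0.
have uy : y \is a GRing.unit by apply: Ddiv; apply: contraNneq nc => ->; rewrite mul0r mulr0.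
split=> //; apply: contraNneq nc => C1.
by rewrite -[y * x]mul1r -C1 !mulrA (mulrVK uy) (mulrVK ux).
Qed.

Lemma nonneg_laurent_seq (K : closedFieldType) (D : unitAlgType K) (x y : D)
    (u v : nat -> D) :
    (forall a : D, a != 0 -> a \is a GRing.unit) ->
    x \is a GRing.unit -> y \is a GRing.unit -> x * y / x / y != 1 ->
    (forall m, u m.+1 * (x * y / x / y) * u m = 1 + v m) ->
    (forall m, v m.+1 * (x * y / x / y) * v m = 1 + u m.+1 ^+ 4) ->
    u 0 = y * x / y -> v 0 = y ->
  forall m, nonneg_laurent x y (u m).
Proof.
move=> Ddiv ux uy C_neq1 u_rec v_rec u0 v0.
have uC : x * y / x / y \is a GRing.unit by rewrite !unitrMl ?unitrV.
have uu0 : u 0 \is a GRing.unit by rewrite u0 !unitrMl ?unitrV.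
have uv0 : v 0 \is a GRing.unit by rewrite v0.
have q0 : u 0 * v 0 = v 0 * (x * y / x / y) * u 0 by rewrite u0 v0 qcomm_initial.
apply: (recurrence_closed (P := nonneg_laurent x y) (u := u) (g := y / x * y / x / y)
  (A := (x^-1 + x^-1 * y + y / x) / x / y) (B := x * x / y)); auto 10.
- by rewrite u0; auto.
- by have := u_rec 0; rewrite u0 v0 => /(initial_difference ux uy) ->.
move=> m; have := seq_recurrence Ddiv uC C_neq1 u_rec v_rec uu0 uv0 q0 m.
by rewrite u0 v0 (psi_initial ux uy) (commutator_factor ux uy).
Qed.

Theorem corollary4p4 (R : realType) (D : unitAlgType R[i]) (x y : D)
  (HD : is_free_skew_field x y) (Rs : int -> D) :
  let C := x * y * x^-1 * y^-1 in
  (forall n : int, Rs (2 * n) * C * Rs (2 * n - 2) = 1 + Rs (2 * n - 1)) ->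
  (forall n : int, Rs (2 * n + 1) * C * Rs (2 * n - 1) = 1 + Rs (2 * n) ^+ 4) ->
  Rs 0 = y * x * y^-1 ->
  Rs 1 = y ->
  forall n : nat, nonneg_laurent x y (Rs (2 * n%:Z)).
Proof.
move=> C H1 H2 R0 R1; have [Ddiv _ _] := HD.
have [ux uy C_neq1] := free_skew_field_commutator HD.
apply: (nonneg_laurent_seq (u := fun m : nat => Rs (2 * m%:Z))
  (v := fun m : nat => Rs (2 * m%:Z + 1)) Ddiv ux uy C_neq1) => [m|m||] /=.
- have := H1 m.+1; have -> : 2 * m.+1%:Z - 2 = 2 * m%:Z by lia.
  by have -> : 2 * m.+1%:Z - 1 = 2 * m%:Z + 1 by lia.
- by have := H2 m.+1; have -> : 2 * m.+1%:Z - 1 = 2 * m%:Z + 1 by lia.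
- by rewrite mulr0.
- by rewrite mulr0 add0r.
Qed.
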